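(* Let $K$ be a commutative ring of characteristic $0$ with unit, let $M$ be a multiplicative $\mathbb{R}$-vector subspace of $\mathcal{H}^{>0}$, let $G=\sum_{\alpha}a_\alpha X^\alpha$ be a generalized power series over $K$ in $X=(X_0,\dots,X_k)$, let $m_0,\dots,m_k\in M$ be small, and let $n\in M$. Then the set $$S_n^G:=\{\alpha\in\operatorname{supp}(G):\ m^\alpha=n\}$$ is finite, where $m^\alpha:=m_0^{\alpha_0}\cdots m_k^{\alpha_k}$.
   Context: $\mathcal{H}$ denotes the Hardy field of germs at $+\infty$ of unary functions definable in the o-minimal structure $\mathbb{R}_{\mathrm{an},\exp}$, ordered by $f<g$ iff $f(x)<g(x)$ for all sufficiently large $x$; $\mathcal{H}^{>0}=\{h\in\mathcal{H}:h>0\}$. A multiplicative $\mathbb{R}$-vector subspace of $\mathcal{H}^{>0}$ is a subgroup closed under real powers. A germ $h$ is small if $\lim_{x\to+\infty}h(x)=0$. A generalized power series over $K$ is a formal series $G=\sum_{\alpha\in[0,\infty)^{k+1}}a_\alpha X^\alpha$ with $a_\alpha\in K$ whose support $\operatorname{supp}(G)=\{\alpha:a_\alpha\neq0\}$ is contained in a cartesian product of well-ordered subsets of $\mathbb{R}$. *)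

From HB Require Import structures.
From mathcomp Require Import all_boot all_order all_algebra.
From mathcomp Require Import all_classical all_reals all_analysis.
Set Implicit Arguments. Unset Strict Implicit. Unset Printing Implicit Defensive.
Import Order.TTheory GRing.Theory Num.Theory.
Import numFieldNormedType.Exports.
Local Open Scope classical_set_scope.
Local Open Scope ring_scope.

(* Germs at +oo are represented by functions R -> R; two functions
   represent the same germ iff they agree eventually. *)
Definition germ_eq {R : realType} (f g : R -> R) : Prop :=
  \forall x \near +oo, f x = g x.

Definition Hpos {R : realType} (H : set (R -> R)) : set (R -> R) :=
  [set f | H f /\ \forall x \near +oo, 0 < f x].

(* M is a multiplicative R-vector subspace of H^{>0}: a subgroup (up to germ
   equality) closed under real powers. *)
Definition mult_R_subspace {R : realType} (H M : set (R -> R)) : Prop :=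
  [/\ M `<=` Hpos H,
      M (fun=> 1),
      (forall f g, M f -> M g -> exists2 h, M h & germ_eq h (fun x => f x * g x)),
      (forall f, M f -> exists2 h, M h & germ_eq h (fun x => (f x)^-1))
    & (forall f (r : R), M f -> exists2 h, M h & germ_eq h (fun x => f x `^ r))].

Definition small {R : realType} (f : R -> R) : Prop :=
  f x @[x --> +oo] --> 0.

Definition char0 (K : comNzRingType) : Prop :=
  forall n : nat, (n%:R : K) = 0 -> n = 0%N.

Definition well_ordered_set {R : realType} (W : set R) : Prop :=
  forall A : set R, A `<=` W -> A !=set0 -> exists2 a, A a & forall b, A b -> a <= b.

Definition supp {R : realType} {K : comNzRingType} {k : nat}
  (a : ('I_k.+1 -> R) -> K) : set ('I_k.+1 -> R) := [set al | a al != 0].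

Definition gen_power_series {R : realType} {K : comNzRingType} {k : nat}
  (a : ('I_k.+1 -> R) -> K) : Prop :=
  (forall al, supp a al -> forall i, 0 <= al i) /\
  exists W : 'I_k.+1 -> set R, (forall i, well_ordered_set (W i)) /\
    (forall al, supp a al -> forall i, W i (al i)).

Definition mpow {R : realType} {k : nat} (m : 'I_k.+1 -> R -> R)
  (al : 'I_k.+1 -> R) : R -> R :=
  fun x => \prod_(i < k.+1) (m i x) `^ (al i).

Definition S_set {R : realType} {K : comNzRingType} {k : nat}
  (a : ('I_k.+1 -> R) -> K) (m : 'I_k.+1 -> R -> R) (n : R -> R)
  : set ('I_k.+1 -> R) :=
  [set al | supp a al /\ germ_eq (mpow m al) n].

(* If S_n^G were infinite, then, each coordinate of its elements ranging in a
   well-ordered set, a Dickson-type argument would give α ≠ β in S_n^G with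
   α ≤ β coordinatewise.  The small germs m_i eventually lie in (0, 1), so
   m^β < m^α eventually, and m^α, m^β cannot both be the germ n. *)

From HB Require Import structures.
From mathcomp Require Import all_boot all_order all_algebra.
From mathcomp Require Import all_classical all_reals all_analysis.
Set Implicit Arguments. Unset Strict Implicit. Unset Printing Implicit Defensive.
Import Order.TTheory GRing.Theory Num.Theory.
Import numFieldNormedType.Exports.
Local Open Scope classical_set_scope.
Local Open Scope ring_scope.

Section WellOrderedSequences.
Variable R : realType.

Lemma well_ordered_nondecreasing_subseq (W : set R) (u : nat -> R) :
  well_ordered_set W -> (forall j, W (u j)) ->
  exists g : nat -> nat,
    (forall j, (g j < g j.+1)%N) /\ (forall j, u (g j) <= u (g j.+1)).
Proof.
move=> WW uW.
have tail_min p : {q | (p <= q)%N /\ forall j, (p <= j)%N -> u q <= u j}.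
  apply: cid.
  have [_ [q pq <-] qmin] : exists2 a, [set u j | j in [set j | (p <= j)%N]] a &
      forall b, [set u j | j in [set j | (p <= j)%N]] b -> a <= b.
    by apply: WW; [move=> _ [j _ <-] | exists (u p), p; rewrite /=].
  by exists q; split=> // j pj; apply: qmin; exists j.
pose h p := sval (tail_min p).
have h_ge p : (p <= h p)%N by case: (svalP (tail_min p)).
have h_min p j : (p <= j)%N -> u (h p) <= u j by case: (svalP (tail_min p)) => _; apply.
pose g j := iter j (fun q => h q.+1) (h 0%N).
have g_gt j : (g j < g j.+1)%N by exact: h_ge.
exists g; split=> // j.
have [p [pg ->]] : exists p, (p <= g j)%N /\ g j = h p.
  by case: j => [|j]; [exists 0%N | exists (g j).+1].
exact/h_min/(leq_trans pg)/ltnW.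
Qed.

Lemma well_ordered_prod_nondecreasing_subseq n (W : 'I_n -> set R)
    (s : nat -> 'I_n -> R) :
  (forall i, well_ordered_set (W i)) -> (forall j i, W i (s j i)) ->
  exists phi : nat -> nat, (forall j, (phi j < phi j.+1)%N) /\
    (forall j i, s (phi j) i <= s (phi j.+1) i).
Proof.
move=> WW sW.
suff /(_ n (leqnn n)) [phi [phiS phi_le]] : forall c, (c <= n)%N ->
    exists phi : nat -> nat, (forall j, (phi j < phi j.+1)%N) /\
      (forall (i : 'I_n) j, (i < c)%N -> s (phi j) i <= s (phi j.+1) i).
  by exists phi; split=> // j i; apply: phi_le.
elim=> [_|c IH cn]; first by exists id.
have [phi [phiS phi_le]] := IH (ltnW cn).
pose ic : 'I_n := Ordinal cn.
have [g [gS g_le]] :=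
  well_ordered_nondecreasing_subseq (WW ic) (fun j => sW (phi j) ic).
have phi_mono : {homo phi : j l / (j < l)%N} by apply: homo_ltn => //; exact: ltn_trans.
exists (phi \o g); split=> [j|i j]; first exact: phi_mono.
rewrite ltnS leq_eqVlt => /orP[/eqP ic_eq|ilt].
  have -> : i = ic by apply: val_inj.
  exact: g_le.
have s_mono : {homo (fun j => s (phi j) i) : l l' / (l <= l')%N >-> l <= l'}.
  by apply: homo_leq => [//|y x z|l]; [exact: le_trans | exact: phi_le].
exact/s_mono/ltnW.
Qed.

Lemma infinite_well_ordered_prod_le_pair n (W : 'I_n -> set R)
    (A : set ('I_n -> R)) :
  (forall i, well_ordered_set (W i)) -> (forall al, A al -> forall i, W i (al i)) ->
  infinite_set A ->
  exists al be, [/\ A al, A be, al != be & forall i, al i <= be i].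
Proof.
move=> WW AW /infiniteP /pcard_leP /injfunPex [f fA f_inj].
have [phi [phiS phi_le]] :=
  well_ordered_prod_nondecreasing_subseq WW (fun j => AW _ (fA j I)).
exists (f (phi 0%N)), (f (phi 1%N)); split=> //; [exact: fA | exact: fA |].
apply/eqP => /f_inj eq_phi.
by move: (phiS 0%N); rewrite eq_phi ?in_setT // ltnn.
Qed.

End WellOrderedSequences.

Lemma gtr_powR (R : realType) (a : R) : 0 < a < 1 -> {homo powR a : x y /~ x < y}.
Proof.
move=> /andP[a0 a1] x y xy.
by rewrite /powR gt_eqF // ltr_expR ltr_nM2r // ln_lt0 // a0 a1.
Qed.

Lemma ltr_mpow (R : realType) k (m : 'I_k.+1 -> R -> R) (al be : 'I_k.+1 -> R) x :
  (forall i, 0 < m i x < 1) -> (forall i, al i <= be i) -> al != be ->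
  mpow m be x < mpow m al x.
Proof.
move=> m01 al_le ne.
have [i0 /eqP ne0] : exists i0, al i0 <> be i0.
  by apply/existsNP => eq_al; move/eqP: ne; apply; apply/funext.
have m_pos i : 0 < m i x by case/andP: (m01 i).
rewrite /mpow (bigD1 i0) //= [X in _ < X](bigD1 i0) //=.
apply: (@lt_le_trans _ _ (m i0 x `^ al i0 * \prod_(i < k.+1 | i != i0) m i x `^ be i)).
  rewrite ltr_pM2r; last by apply: prodr_gt0 => i _; apply: powR_gt0.
  by apply: gtr_powR; rewrite // lt_neqAle ne0 al_le.
apply: ler_wpM2l; first exact: powR_ge0.
apply: ler_prod => i _; rewrite powR_ge0 ger_powR //.
by have /andP[-> /ltW ->] := m01 i.
Qed.

Lemma small_pos_eventually_in01 (R : realType) (I : finType) (f : I -> R -> R) :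
  (forall i, (\forall x \near +oo, 0 < f i x) /\ small (f i)) ->
  \forall x \near +oo, forall i, 0 < f i x < 1.
Proof.
move=> f_small; apply: filter_forall => i.
have [f_pos f_cvg] := f_small i.
by apply: filterS2 f_pos (cvgr_lt _ f_cvg _ ltr01) => x -> ->.
Qed.

Lemma mpow_germ_neq (R : realType) k (m : 'I_k.+1 -> R -> R) (al be : 'I_k.+1 -> R) :
  (\forall x \near +oo, forall i, 0 < m i x < 1) ->
  (forall i, al i <= be i) -> al != be ->
  ~ germ_eq (mpow m al) (mpow m be).
Proof.
move=> m01 al_le ne eq_mpow.
have [x [/ltr_mpow lt_mpow eq_x]] := filter_ex (filterI m01 eq_mpow).
by move: (lt_mpow _ _ al_le ne); rewrite eq_x ltxx.
Qed.

Theorem lemma5p1 (R : realType) (H : set (R -> R)) (K : comNzRingType)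
  (M : set (R -> R)) (k : nat) (a : ('I_k.+1 -> R) -> K)
  (m : 'I_k.+1 -> R -> R) (n : R -> R) :
  char0 K ->
  mult_R_subspace H M ->
  gen_power_series a ->
  (forall i, M (m i) /\ small (m i)) ->
  M n ->
  finite_set (S_set a m n).
Proof.
move=> _ [MH _ _ _ _] [_ [W [WW suppW]]] mM _.
have m01 : \forall x \near +oo, forall i, 0 < m i x < 1.
  by apply: small_pos_eventually_in01 => i; have [/MH[_ ?] ?] := mM i.
have S_W al : S_set a m n al -> forall i, W i (al i) by case=> /suppW.
apply: contrapT => /(infinite_well_ordered_prod_le_pair WW S_W).
move=> [al [be [[_ al_n] [_ be_n] ne al_le]]].
apply: (mpow_germ_neq m01 al_le ne).
by move: al_n be_n; apply: filterS2 => x -> ->.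
Qed.
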